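(* Consider the directed square lattice on $\{1,\dots,n\}^2$ with random nonzero vertex weights $w_u$ and random nonzero edge weights $w_{u,v}$, and let $X_u=\log|w_u|$, $X_e=\log|w_e|$. Suppose there is $t>0$ and $M<\infty$ such that $\mathbb{E}e^{-tX_u},\mathbb{E}e^{tX_u}\le M$ for all vertices $u$ and all $n$, and likewise for edges. Define modified weights by $w'_{u,v}=w_{u,v}\,w_v$ for each edge $(u,v)$ and $w'_u=1$ for each vertex $u$, and let $Z^{(k)\prime}_{S,T}$ be the quantity $Z^{(k)}_{S,T}$ computed with the modified weights. Then for any $k\geq1$, $\delta>0$ and all $S,T$, \[ \mathbb{P}\left(n^{-1/3}\left|\log|Z^{(k)}_{S,T}|-\log|Z^{(k)\prime}_{S,T}|\right|>\delta\right)\to 0 \quad (n\to\infty). \]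
   Context: The directed square lattice has vertex set $\{1,\dots,n\}^2$ and directed edges $(i,j)\to(i+1,j)$, $(i,j)\to(i,j+1)$. A path $\pi=(u_1\to\dots\to u_m)$ (length zero allowed) has weight $\mathrm{wt}(\pi)=\prod_{i=1}^{m-1}w_{u_i,u_{i+1}}\prod_{i=1}^m w_{u_i}$. For sequences $S=(u_1,\dots,u_k)$, $T=(v_1,\dots,v_k)$ of distinct vertices, $Z^{(k)}_{S,T}=\sum_\pi \mathrm{sgn}(\sigma(\pi))\prod_{i=1}^k\mathrm{wt}(\pi_i)$, summed over $k$-tuples of pairwise vertex-disjoint paths with $\pi_i$ from $u_i$ to $v_{\sigma(i)}$ for a permutation $\sigma=\sigma(\pi)$. Edge weights need not be independent, only independent along every path. *)

From HB Require Import structures.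
From mathcomp Require Import all_boot all_order all_algebra all_fingroup.
From mathcomp Require Import all_classical all_reals all_analysis.
Set Implicit Arguments. Unset Strict Implicit. Unset Printing Implicit Defensive.
Import Order.TTheory GRing.Theory Num.Theory.
Local Open Scope ring_scope.

(* Vertices of the directed square lattice of side n, 0-indexed:
   (i,j) : 'I_n * 'I_n stands for the vertex (i+1, j+1) of {1..n}^2. *)
Definition vtx (n : nat) : finType := ('I_n * 'I_n)%type.

Definition lstep (n : nat) (u v : vtx n) : bool :=
  (((v.1 : nat) == (u.1 : nat).+1) && ((v.2 : nat) == (u.2 : nat)))
  || (((v.1 : nat) == (u.1 : nat)) && ((v.2 : nat) == (u.2 : nat).+1)).

(* Finite type of candidate vertex sequences of length between 1 and 2n.
   Every directed lattice path in {1..n}^2 has at most 2n-1 vertices,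
   so all lattice paths are represented (injectively) here. *)
Definition ptype (n : nat) : finType := {m : 'I_(2 * n) & m.+1.-tuple (vtx n)}.

Definition pseq (n : nat) (p : ptype n) : seq (vtx n) := tval (tagged p).

Definition is_lpath (n : nat) (u v : vtx n) (s : seq (vtx n)) : bool :=
  if s is x :: s' then [&& x == u, path (@lstep n) x s' & last x s' == v]
  else false.

Definition path_wt (R : pzRingType) (n : nat) (we : vtx n -> vtx n -> R)
  (wv : vtx n -> R) (s : seq (vtx n)) : R :=
  (\prod_(e <- zip s (behead s)) we e.1 e.2) * \prod_(x <- s) wv x.

Definition Zk (R : pzRingType) (n k : nat) (we : vtx n -> vtx n -> R)
  (wv : vtx n -> R) (S T : 'I_k -> vtx n) : R :=
  \sum_(s : 'S_k)
    \sum_(P : {ffun 'I_k -> ptype n} |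
            [forall i, is_lpath (S i) (T (s i)) (pseq (P i))] &&
            [forall i, forall j, (i != j) ==>
               all (fun x => x \notin pseq (P j)) (pseq (P i))])
      (-1) ^+ s * \prod_(i < k) path_wt we wv (pseq (P i)).

Definition mod_we (R : pzRingType) (n : nat) (we : vtx n -> vtx n -> R)
  (wv : vtx n -> R) : vtx n -> vtx n -> R := fun u v => we u v * wv v.
Definition mod_wv (R : pzRingType) (n : nat) : vtx n -> R := fun _ => 1.

From HB Require Import structures.
From mathcomp Require Import all_boot all_order all_algebra all_fingroup.
From mathcomp Require Import all_classical all_reals all_analysis.
From mathcomp Require Import measurable_realfun.
From mathcomp Require Import ring.

(* Each path counted by Z^{(k)}_{S,T} starts at a source S_i, and moving every
   vertex weight onto the edge entering that vertex leaves exactly the weight of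
   the starting vertex behind.  Hence Z = (prod_i w_{S_i}) Z', so that
   |log|Z| - log|Z'|| <= sum_i |X_{S_i}| whatever the edge weights, and whether or
   not S and T are injective.  Markov's inequality for e^{t|X|} gives
   P(|X_u| >= a) <= 2M e^{-ta}; a union bound with a = delta n^{1/3} / k bounds the
   probability by 2kM exp(-t delta n^{1/3} / k) = O(1/n). *)

Set Implicit Arguments. Unset Strict Implicit. Unset Printing Implicit Defensive.
Import Order.TTheory GRing.Theory Num.Theory numFieldNormedType.Exports.
Local Open Scope ring_scope.
Local Open Scope classical_set_scope.

Section modified_weights.
Variables (R : comPzRingType) (n : nat).
Variables (we : vtx n -> vtx n -> R) (wv : vtx n -> R).

Lemma path_wt_mod u v s : is_lpath u v s ->
  path_wt we wv s = wv u * path_wt (mod_we we wv) (@mod_wv R n) s.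
Proof.
case: s => [//|x s] /and3P[/eqP -> _ _].
have head_wt : \prod_(e <- zip (u :: s) s) wv e.2 = \prod_(y <- s) wv y.
  by rewrite -(big_map snd xpredT) -[map _ _]/(unzip2 _) unzip2_zip.
rewrite /path_wt /mod_we /mod_wv big_split /= head_wt big1_eq big_cons.
by rewrite mulr1 mulrCA.
Qed.

Lemma Zk_mod (k : nat) (S T : 'I_k -> vtx n) :
  Zk we wv S T = (\prod_(i < k) wv (S i)) * Zk (mod_we we wv) (@mod_wv R n) S T.
Proof.
rewrite /Zk mulr_sumr; apply: eq_bigr => s _; rewrite mulr_sumr.
apply: eq_bigr => PP /andP[/forallP lpathP _].
rewrite mulrCA -big_split /=; congr (_ * _); apply: eq_bigr => i _.
exact: path_wt_mod (lpathP i).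
Qed.

End modified_weights.

Lemma ln_norm_prodM_sub_le (R : realType) (I : Type) (r : seq I) (c : I -> R) (z : R) :
  (forall i, c i != 0) ->
  `|ln `|(\prod_(i <- r) c i) * z| - ln `|z| | <= \sum_(i <- r) `|ln `|c i| |.
Proof.
move=> c_neq0; have [->|z_neq0] := eqVneq z 0.
  by rewrite mulr0 subrr normr0 sumr_ge0.
elim: r => [|i r IH]; first by rewrite big_nil mul1r subrr normr0 sumr_ge0.
have prod_neq0 : (\prod_(j <- r) c j) * z != 0.
  by rewrite mulf_neq0 // prodf_seq_neq0 (@eq_all _ _ predT) ?all_predT.
rewrite big_cons -mulrA normrM lnM ?posrE ?normr_gt0 // -addrA big_cons.
exact: le_trans (ler_normD _ _) (lerD _ IH).
Qed.

Lemma sumr_gt_exists (R : realDomainType) (I : finType) (x : I -> R) (a : R) :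
  a *+ #|I| < \sum_i x i -> exists i, a < x i.
Proof.
apply: contraPP => /forallNP x_le; apply/negP; rewrite -leNgt -sumr_const.
by apply: ler_sum => i _; rewrite leNgt; exact/negP/x_le.
Qed.

Lemma path_zip_rel (V : eqType) (r : rel V) (x : V) (s : seq V) :
  path r x s -> forall e, e \in zip (x :: s) s -> r e.1 e.2.
Proof.
elim: s x => [|y s IH] x //= /andP[rxy ps] e.
by rewrite inE => /predU1P[-> //|]; exact: IH.
Qed.

Lemma measurable_sum_cond (R : realType) (d : measure_display) (Omega : measurableType d)
    (I : finType) (p : pred I) (h : I -> Omega -> R) :
  (forall i, p i -> measurable_fun setT (h i)) ->
  measurable_fun setT (fun w => \sum_(i | p i) h i w).
Proof.
move=> mh; under eq_fun do rewrite big_mkcond /=.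
by apply: measurable_sum => i; case: (boolP (p i)) => [/mh|_] //; exact: measurable_cst.
Qed.

Section measurability.
Context (R : realType) (d : measure_display) (Omega : measurableType d) (m : nat).
Variables (we : Omega -> vtx m -> vtx m -> R) (wv : Omega -> vtx m -> R).
Hypothesis mwv : forall u, measurable_fun setT (fun w => wv w u).
Hypothesis mwe : forall u v, lstep u v -> measurable_fun setT (fun w => we w u v).

Lemma measurable_path_wt u v s : is_lpath u v s ->
  measurable_fun setT (fun w => path_wt (we w) (wv w) s).
Proof.
case: s => [//|x s] /and3P[_ xs_path _].
apply: measurable_funM.
  by apply: measurable_prod => e /(path_zip_rel xs_path)/mwe.
by apply: measurable_prod => y _; exact: mwv.
Qed.

Lemma measurable_Zk k (S T : 'I_k -> vtx m) :
  measurable_fun setT (fun w => Zk (we w) (wv w) S T).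
Proof.
rewrite /Zk; apply: measurable_sum => s /=.
apply: measurable_sum_cond => PP /andP[/forallP lpathP _].
apply: measurable_funM; first exact: measurable_cst.
by apply: measurable_prod => i _; exact: measurable_path_wt (lpathP i).
Qed.

End measurability.

Lemma measurable_ln_norm (R : realType) (d : measure_display) (Omega : measurableType d)
    (f : Omega -> R) :
  measurable_fun setT f -> measurable_fun setT (fun w => ln `|f w|).
Proof.
by move=> mf; apply: measurableT_comp (@measurable_ln R) _; exact: measurableT_comp.
Qed.

Lemma expR_mul_norm_le (R : realType) (t x : R) :
  expR (t * `|x|) <= expR (t * x) + expR (- t * x).
Proof.
have [x_ge0|x_lt0] := leP 0 x.
  by rewrite ger0_norm // lerDl expR_ge0.
by rewrite ltr0_norm // mulrN mulNr lerDr expR_ge0.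
Qed.

Section tail_bounds.
Context (R : realType) (d : measure_display) (Omega : measurableType d).
Variable P : probability Omega R.
Local Open Scope ereal_scope.

Lemma measurable_fun_c_infty (f : Omega -> R) (a : R) :
  measurable_fun setT f -> measurable [set w | (a <= f w)%R].
Proof. by move=> mf; rewrite -preimage_itvcy -[X in measurable X]setTI; exact: mf. Qed.

Lemma measurable_fun_o_infty (f : Omega -> R) (a : R) :
  measurable_fun setT f -> measurable [set w | (a < f w)%R].
Proof. by move=> mf; rewrite -preimage_itvoy -[X in measurable X]setTI; exact: mf. Qed.

Lemma integral_expR_mul_norm_le (X : Omega -> R) (t : R) : measurable_fun setT X ->
  \int[P]_w (expR (t * `|X w|))%:E <=
    \int[P]_w (expR (t * X w))%:E + \int[P]_w (expR (- t * X w))%:E.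
Proof.
move=> mX; have mexpR (Y : Omega -> R) c : measurable_fun setT Y ->
    measurable_fun setT (fun w => (expR (c * Y w))%:E).
  move=> mY; apply/measurable_EFinP; apply: measurableT_comp (@measurable_expR R) _.
  exact: measurableT_comp (mulrl_measurable c) mY.
have expR_EFin_ge0 c (Y : Omega -> R) w : setT w -> 0 <= (expR (c * Y w))%:E.
  by rewrite lee_fin expR_ge0.
rewrite -ge0_integralD //; try exact: mexpR.
apply: ge0_le_integral => //.
  apply: (mexpR (fun w => `|X w|)%R).
  exact: measurableT_comp (@normr_measurable R setT) mX.
  by apply: emeasurable_funD; exact: mexpR.
by move=> w _; rewrite -EFinD lee_fin expR_mul_norm_le.
Qed.

Lemma prob_le_norm_le_expR (X : Omega -> R) (t a : R) :
  measurable_fun setT X -> (0 <= t)%R -> (0 < a)%R ->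
  P [set w | (a <= `|X w|)%R] <=
    (expR (- (t * a)))%:E * \int[P]_w (expR (t * `|X w|))%:E.
Proof.
move=> mX t_ge0 a_gt0; pose f := er_map (fun x : R => expR (t * x)).
have mf : measurable_fun setT f.
  apply: (measurable_er_map Omega); apply: measurableT_comp.
    exact: measurable_expR.
  exact: mulrl_measurable.
have f_ge0 r : 0 <= r -> 0 <= f r by case: r => //= r _; rewrite lee_fin expR_ge0.
have f_nd : {in `[0, +oo[%classic &, {homo f : x y / x <= y}}.
  move=> [x| |] [y| |] _ _ //=; rewrite ?lee_fin ?leey ?leNye // => le_xy.
  by rewrite ler_expR ler_wpM2l.
have mX' : measurable_fun setT (EFin \o X) by exact/measurable_EFinP.
have := le_integral_comp_abse P measurableT mf f_ge0 f_nd mX' a_gt0.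
by rewrite setTI /= expRN -lee_pdivlMl ?lte_fin ?expR_gt0.
Qed.

Lemma prob_le_norm_le (X : Omega -> R) (t M a : R) :
  measurable_fun setT X -> (0 <= t)%R -> (0 < a)%R ->
  \int[P]_w (expR (- t * X w))%:E <= M%:E ->
  \int[P]_w (expR (t * X w))%:E <= M%:E ->
  P [set w | (a <= `|X w|)%R] <= (2 * M * expR (- (t * a)))%:E.
Proof.
move=> mX t_ge0 a_gt0 mgfN mgf.
apply: le_trans (prob_le_norm_le_expR mX t_ge0 a_gt0) _.
have mgf_norm := le_trans (integral_expR_mul_norm_le t mX) (leeD mgf mgfN).
apply: le_trans (lee_wpmul2l _ mgf_norm) _; first by rewrite lee_fin expR_ge0.
by rewrite -EFinD -EFinM lee_fin mulrC -mulr2n mulr_natl.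
Qed.

Lemma prob_gt_sum_norm_le (m : nat) (X : 'I_m.+1 -> Omega -> R) (D : Omega -> R)
    (t M b : R) :
  measurable_fun setT D -> (forall i, measurable_fun setT (X i)) ->
  (0 <= t)%R -> (0 < b)%R ->
  (forall i, \int[P]_w (expR (- t * X i w))%:E <= M%:E /\
             \int[P]_w (expR (t * X i w))%:E <= M%:E) ->
  (forall w, D w <= \sum_i `|X i w|)%R ->
  P [set w | (b < D w)%R] <= ((2 * M * expR (- (t * (b / m.+1%:R)))) *+ m.+1)%:E.
Proof.
move=> mD mX t_ge0 b_gt0 mgf D_le; set a := (b / m.+1%:R)%R.
have a_gt0 : (0 < a)%R by rewrite divr_gt0.
pose F j := [set w | (a <= `|X (inord j) w|)%R].
have mF j : `I_m.+1 j -> measurable (F j).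
  by move=> _; apply: measurable_fun_c_infty; exact: measurableT_comp (mX _).
have sub_F : [set w | (b < D w)%R] `<=` \big[setU/set0]_(j < m.+1) F j.
  move=> w /= /lt_le_trans /(_ (D_le w)); rewrite -bigcup_mkord.
  have -> : b = (a *+ #|'I_m.+1|)%R by rewrite card_ord -mulr_natr divfK ?pnatr_eq0.
  case/sumr_gt_exists => i /ltW a_le; exists i; first exact: ltn_ord.
  by rewrite /F /= inord_val.
have mD_gt := measurable_fun_o_infty b mD.
apply: le_trans (@content_subadditive _ _ _ P _ F m.+1 mF mD_gt sub_F) _.
rewrite -[m.+1 in X in _ <= X]card_ord -sumr_const -sumEFin; apply: lee_sum => j _.
by rewrite /F inord_val; have [? ?] := mgf j; exact: prob_le_norm_le.
Qed.

End tail_bounds.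

Lemma expRN_le_inv_cube (R : realType) (x : R) : 0 < x -> expR (- x) <= 6 / x ^+ 3.
Proof.
move=> x_gt0; rewrite expRN -[6 / _]invf_div.
rewrite lef_pV2 ?posrE ?expR_gt0 ?divr_gt0 ?exprn_gt0 //.
by apply: le_trans (expR_ge1Dxn 2 (ltW x_gt0)); rewrite lerDr.
Qed.

Lemma cvg_expRN_cbrt (R : realType) (c : R) : 0 < c ->
  (fun n : nat => expR (- (c * n.+1%:R `^ 3^-1))) @ \oo --> 0.
Proof.
move=> c_gt0; have cbrt_cube n : (n.+1%:R `^ 3^-1) ^+ 3 = n.+1%:R :> R.
  by rewrite -powR_mulrn ?powR_ge0 // -powRrM mulVf // powRr1.
have upper : (fun n => 6 / c ^+ 3 * harmonic n) @ \oo --> 0.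
  by rewrite -(mulr0 (6 / c ^+ 3)); apply: cvgMr; exact: cvg_harmonic.
apply: (squeeze_cvgr _ (cvg_cst 0) upper); apply: nearW => n.
rewrite expR_ge0 /=; apply: le_trans (expRN_le_inv_cube _) _.
  by rewrite mulr_gt0 ?powR_gt0.
by rewrite exprMn cbrt_cube invfM mulrA.
Qed.

Lemma prob_ln_Zk_mod_gt (R : realType) (d : measure_display) (Omega : measurableType d)
    (P : probability Omega R) (m k : nat)
    (we : Omega -> vtx m -> vtx m -> R) (wv : Omega -> vtx m -> R)
    (S T : 'I_k.+1 -> vtx m) (t M b : R) :
  (forall u, measurable_fun setT (fun w => wv w u)) ->
  (forall u v, lstep u v -> measurable_fun setT (fun w => we w u v)) ->
  (forall w u, wv w u != 0) -> 0 <= t -> 0 < b ->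
  (forall u, (\int[P]_w (expR (- t * ln `|wv w u|))%:E <= M%:E)%E /\
             (\int[P]_w (expR (t * ln `|wv w u|))%:E <= M%:E)%E) ->
  (P [set w | (b < `| ln `|Zk (we w) (wv w) S T|
                      - ln `|Zk (mod_we (we w) (wv w)) (@mod_wv R m) S T| |)%R ]
    <= ((2 * M * expR (- (t * (b / k.+1%:R)))) *+ k.+1)%:E)%E.
Proof.
move=> mwv mwe wv_neq0 t_ge0 b_gt0 mgf_wv.
have mZ : measurable_fun setT (fun w => Zk (we w) (wv w) S T) by exact: measurable_Zk.
have mZ' : measurable_fun setT
    (fun w => Zk (mod_we (we w) (wv w)) (@mod_wv R m) S T).
  apply: measurable_Zk => [u|u v /mwe mwe_uv]; first exact: measurable_cst.
  exact: measurable_funM mwe_uv (mwv v).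
apply: (prob_gt_sum_norm_le (X := fun i w => ln `|wv w (S i)|)) => //.
- apply: measurableT_comp (@normr_measurable R setT) _.
  by apply: measurable_funB; exact: measurable_ln_norm.
- by move=> i; exact: measurable_ln_norm.
- by move=> w; rewrite Zk_mod ln_norm_prodM_sub_le.
Qed.

Theorem proposition3p2 (R : realType) (d : measure_display) (Omega : measurableType d)
  (P : probability Omega R)
  (wv : forall n : nat, Omega -> vtx n.+1 -> R)
  (we : forall n : nat, Omega -> vtx n.+1 -> vtx n.+1 -> R)
  (t M : R) (k : nat) (delta : R)
  (S T : forall n : nat, 'I_k -> vtx n.+1) :
  (forall n u, measurable_fun setT (fun w => wv n w u)) ->
  (forall n u v, lstep u v -> measurable_fun setT (fun w => we n w u v)) ->
  (forall n w u, wv n w u != 0) ->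
  (forall n w u v, lstep u v -> we n w u v != 0) ->
  0 < t ->
  (forall n u,
     (\int[P]_w (expR (- t * ln `|wv n w u|))%:E <= M%:E)%E /\
     (\int[P]_w (expR (t * ln `|wv n w u|))%:E <= M%:E)%E) ->
  (forall n u v, lstep u v ->
     (\int[P]_w (expR (- t * ln `|we n w u v|))%:E <= M%:E)%E /\
     (\int[P]_w (expR (t * ln `|we n w u v|))%:E <= M%:E)%E) ->
  (1 <= k)%N -> 0 < delta ->
  (\forall n \near \oo, injective (S n) /\ injective (T n)) ->
  (fun n : nat => P [set w | delta <
      (n.+1%:R : R) `^ (- 3^-1) *
      `| ln `|Zk (we n w) (wv n w) (S n) (T n)|
         - ln `|Zk (mod_we (we n w) (wv n w)) (@mod_wv R n.+1) (S n) (T n)| | ])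
    @ \oo --> 0%E.
Proof.
move=> mwv mwe wv_neq0 _ t_gt0 mgf_wv _ k_ge1 delta_gt0 _.
case: k S T k_ge1 => [//|k] S T _.
pose y n : R := n.+1%:R `^ 3^-1.
have y_gt0 n : 0 < y n by rewrite powR_gt0.
pose c := t * delta / k.+1%:R; pose K := 2 * M * k.+1%:R.
have bound_cvg : (fun n => (K * expR (- (c * y n)))%:E) @ \oo --> 0%E.
  apply: cvg_EFin; first exact: nearW.
  by rewrite -(mulr0 K); apply: cvgMr; apply: cvg_expRN_cbrt; rewrite !mulr_gt0.
apply: (squeeze_cvge _ (cvg_cst 0%E) bound_cvg); apply: nearW => n /=.
rewrite measure_ge0 /=.
under eq_set => w do rewrite powRN mulrC ltr_pdivlMr // -/(y n).
have := prob_ln_Zk_mod_gt (S n) (T n) (mwv n) (mwe n) (wv_neq0 n) (ltW t_gt0)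
  (mulr_gt0 delta_gt0 (y_gt0 n)) (mgf_wv n).
move/le_trans; apply.
have -> : c * y n = t * (delta * y n / k.+1%:R) by rewrite /c; ring.
by rewrite lee_fin -mulr_natr /K mulrAC.
Qed.
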